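(* (Gronwall-type lemma.) Let $z\in C^{\beta\text{-Hol}}([-r,T],\mathbb{R}^d)$ and suppose there are constants $A,C>0$ such that for all $0\le s\le t\le T$, $$|||z|||_{\beta,[s,t]}\le A+C\big((t-s)^{1-\beta}+(t-s)^{\nu-\beta}|||\omega|||_{\nu,[s,t]}\big)\|z\|_{\infty,\beta,[s-r,t]}.$$ Let $\mu\in(0,\min\{\tfrac12,C\})$ and let $N(t,\omega)$ be the counting function of the stopping times associated with this $C$ and $\mu$. Then for all $t\in[0,T]$, $$\|z_t\|_{\infty,\beta,[-r,0]}\le(1-2\mu)^{-(N(t,\omega)+1)}\Big[\frac{A}{\mu}+\|z\|_{\infty,\beta,[-r,0]}\Big].$$
   Context: $\|\cdot\|$ is the Euclidean norm; $r,T>0$; $z_t(u)=z(t+u)$, $u\in[-r,0]$. For $0<\alpha\le1$: $|||z|||_{\alpha,[a,b]}=\sup_{a\le s<t\le b}\frac{\|z(t)-z(s)\|}{(t-s)^\alpha}$, $\|z\|_{\infty,\alpha,[a,b]}=\sup_{[a,b]}\|z\|+|||z|||_{\alpha,[a,b]}$, $C^{\alpha\text{-Hol}}$ the space where finite. Parameters: $\nu\in(\tfrac12,1]$, $\beta\in(0,\nu)$, $\omega\in C^{\nu\text{-Hol}}([0,T],\mathbb{R})$ with $\lim_{h\to0}\sup_{0\le s<t\le T,\,t-s\le h}\frac{|\omega(t)-\omega(s)|}{(t-s)^\nu}=0$. Stopping times: given $C>0$ and $\mu\in(0,C)$, $t_0=0$, $t_{i+1}=\sup\{t\in[t_i,T]: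 C[(t-t_i)^{1-\beta}+(t-t_i)^{\nu-\beta}|||\omega|||_{\nu,[t_i,t]}]\le\mu\}$; counting function $N(t,\omega):=\#\{i\ge1:t_i<t\}$. *)

From Stdlib Require Import Reals Lra List Classical ClassicalEpsilon.
Open Scope R_scope.

(* Supremum of a set of reals: the least upper bound if the set is
   nonempty and bounded above, 0 otherwise. *)
Definition Rsup (E : R -> Prop) : R :=
  match excluded_middle_informative (bound E /\ exists x, E x) with
  | left H => proj1_sig (completeness E (proj1 H) (proj2 H))
  | right _ => 0
  end.

(* x^a for real exponent, with the convention 0^a = 0 (a > 0 in all uses). *)
Definition rpow (x a : R) : R := if Rle_dec x 0 then 0 else Rpower x a.

(* Vectors in R^d are functions nat -> R (only coordinates 0..d-1 matter). *)
Fixpoint sumsq (d : nat) (x : nat -> R) : R :=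
  match d with
  | O => 0
  | S n => sumsq n x + x n ^ 2
  end.

Definition vnorm (d : nat) (x : nat -> R) : R := sqrt (sumsq d x).
Definition vdist (d : nat) (x y : nat -> R) : R := vnorm d (fun i => x i - y i).

(* alpha-Hoelder seminorm |||f|||_{alpha,[a,b]} w.r.t. a distance dist;
   0 is included so that the empty case (a = b) gives 0. *)
Definition holsemi {X : Type} (dist : X -> X -> R) (alpha : R) (f : R -> X)
    (a b : R) : R :=
  Rsup (fun q => q = 0 \/ exists s t, a <= s /\ s < t /\ t <= b /\
                   q = dist (f t) (f s) / rpow (t - s) alpha).

Definition supnorm {X : Type} (nrm : X -> R) (f : R -> X) (a b : R) : R :=
  Rsup (fun v => exists u, a <= u /\ u <= b /\ v = nrm (f u)).

Definition holnorm (d : nat) (alpha : R) (z : R -> nat -> R) (a b : R) : R :=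
  supnorm (vnorm d) z a b + holsemi (vdist d) alpha z a b.

Definition is_holder {X : Type} (dist : X -> X -> R) (alpha : R) (f : R -> X)
    (a b : R) : Prop :=
  exists K, forall s t, a <= s -> s < t -> t <= b ->
    dist (f t) (f s) <= K * rpow (t - s) alpha.

Definition scal_dist (x y : R) : R := Rabs (x - y).

Definition segment {X : Type} (z : R -> X) (t : R) : R -> X := fun u => z (t + u).

Fixpoint stop_time (C mu beta nu T : R) (omega : R -> R) (i : nat) : R :=
  match i with
  | O => 0
  | S k =>
      let ti := stop_time C mu beta nu T omega k in
      Rsup (fun t => ti <= t /\ t <= T /\
              C * (rpow (t - ti) (1 - beta)
                   + rpow (t - ti) (nu - beta) * holsemi scal_dist nu omega ti t) <= mu)
  end.

Definition card_is (P : nat -> Prop) (n : nat) : Prop :=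
  exists l : list nat, NoDup l /\ (forall i, In i l <-> P i) /\ length l = n.

(* #P if P is finite (0 otherwise; P is finite in the situation of interest) *)
Definition ncard (P : nat -> Prop) : nat :=
  match excluded_middle_informative (exists n, card_is P n) with
  | left H => proj1_sig (constructive_indefinite_description _ H)
  | right _ => O
  end.

Definition Ncount (C mu beta nu T : R) (omega : R -> R) (t : R) : nat :=
  ncard (fun i => (1 <= i)%nat /\ stop_time C mu beta nu T omega i < t).

From Stdlib Require Import Reals Lra Lia List Classical ClassicalEpsilon Wf_nat
  FunctionalExtensionality PropExtensionality.
Open Scope R_scope.

(* Write Y_k for the norm of the segment z_{t_k}, i.e. of z on the window
   [t_k - r, t_k].  On a stopping interval [t_k, t_{k+1}] the Gronwall factor is at
   most mu, and t_{k+1} - t_k <= 1, so splitting the window at t_k gives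
     |||z|||_{[t_k, c]} <= A + mu (Y_k + 2 |||z|||_{[t_k, c]});
   absorbing the last term yields |||z|||_{[t_k, c]} <= (A + mu Y_k) / (1 - 2 mu), hence
   the norm of z_c is at most (Y_k + 2 A) / (1 - 2 mu) and Y_k + A/mu grows at most
   by the factor 1 / (1 - 2 mu) from one stopping time to the next.  The endpoint
   c = t_{k+1}, where the factor may exceed mu, is reached by continuity of z.  The
   stopping times reach T after finitely many steps because the factor is uniformly
   small on short intervals, and t lies in the (N(t, omega) + 1)-th interval. *)

Lemma Rdiv_le_iff (x p M : R) : 0 < p -> x / p <= M <-> x <= M * p.
Proof.
  intros Hp; split; intros H.
  - replace x with (x / p * p) by (field; lra).
    apply Rmult_le_compat_r; lra.
  - apply Rmult_le_reg_r with p; [lra|].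
    replace (x / p * p) with x by (field; lra); exact H.
Qed.

Lemma Rle_div_iff (x p M : R) : 0 < p -> x <= M / p <-> x * p <= M.
Proof.
  intros Hp; split; intros H.
  - replace M with (M / p * p) by (field; lra).
    apply Rmult_le_compat_r; lra.
  - apply Rmult_le_reg_r with p; [lra|].
    replace (M / p * p) with M by (field; lra); exact H.
Qed.

Lemma Rsup_ub (E : R -> Prop) x : bound E -> E x -> x <= Rsup E.
Proof.
  intros Hb Hx; unfold Rsup.
  destruct excluded_middle_informative as [H|H].
  - destruct completeness as [m Hm]; simpl; exact (proj1 Hm x Hx).
  - exfalso; apply H; eauto.
Qed.

Lemma Rsup_lub (E : R -> Prop) x0 M :
  E x0 -> (forall x, E x -> x <= M) -> Rsup E <= M.
Proof.
  intros Hx0 HM; unfold Rsup.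
  destruct excluded_middle_informative as [H|H].
  - destruct completeness as [m Hm]; simpl; exact (proj2 Hm M HM).
  - exfalso; apply H; split; [exists M; exact HM | eauto].
Qed.

Lemma Rsup_approx (E : R -> Prop) x0 c :
  E x0 -> c < Rsup E -> exists2 x, E x & c < x.
Proof.
  intros Hx0 Hc; apply NNPP; intros Hn.
  enough (Rsup E <= c) by lra.
  apply (Rsup_lub _ x0); [exact Hx0|].
  intros x Hx; apply Rnot_lt_le; intros Hcx; apply Hn; eauto.
Qed.

Lemma Rsup_ge0 (E : R -> Prop) : (forall x, E x -> 0 <= x) -> 0 <= Rsup E.
Proof.
  intros H; unfold Rsup.
  destruct excluded_middle_informative as [[Hb [x Hx]]|_]; [|lra].
  destruct completeness as [m Hm]; simpl.
  specialize (H x Hx); specialize (proj1 Hm x Hx); lra.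
Qed.

Lemma Rsup_ext (E F : R -> Prop) : (forall x, E x <-> F x) -> Rsup E = Rsup F.
Proof.
  intros H; f_equal; apply functional_extensionality; intros x.
  apply propositional_extensionality, H.
Qed.

Lemma rpow_nonneg x a : 0 <= rpow x a.
Proof. unfold rpow; destruct Rle_dec; [lra | left; apply exp_pos]. Qed.

Lemma rpow_pos x a : 0 < x -> 0 < rpow x a.
Proof. intros Hx; unfold rpow; destruct Rle_dec; [lra | apply exp_pos]. Qed.

Lemma rpow_nonpos x a : x <= 0 -> rpow x a = 0.
Proof. intros Hx; unfold rpow; destruct Rle_dec; lra. Qed.

Lemma rpow_le x y a : 0 < a -> x <= y -> rpow x a <= rpow y a.
Proof.
  intros Ha Hxy; unfold rpow.
  destruct (Rle_dec x 0), (Rle_dec y 0); try lra.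
  - left; apply exp_pos.
  - apply Rle_Rpower_l; lra.
Qed.

Lemma rpow_1_l a : rpow 1 a = 1.
Proof.
  unfold rpow, Rpower; destruct Rle_dec; [lra|].
  rewrite ln_1, Rmult_0_r; apply exp_0.
Qed.

Lemma rpow_le_1 x a : 0 < a -> x <= 1 -> rpow x a <= 1.
Proof. intros Ha Hx; rewrite <- (rpow_1_l a); apply rpow_le; assumption. Qed.

Lemma rpow_ge_1 x a : 0 < a -> 1 <= x -> 1 <= rpow x a.
Proof. intros Ha Hx; rewrite <- (rpow_1_l a) at 1; apply rpow_le; assumption. Qed.

Lemma rpow_small a e : 0 < a -> 0 < e ->
  exists2 h, 0 < h & forall x, x <= h -> rpow x a <= e.
Proof.
  intros Ha He; exists (Rpower e (/ a)); [apply exp_pos|].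
  intros x Hx; apply Rle_trans with (rpow (Rpower e (/ a)) a); [apply rpow_le; assumption|].
  unfold rpow; destruct Rle_dec as [H|_].
  - generalize (exp_pos (/ a * ln e)); unfold Rpower in H; lra.
  - rewrite Rpower_mult, Rinv_l, Rpower_1; lra.
Qed.

Lemma sumsq_nonneg d x : 0 <= sumsq d x.
Proof. induction d; simpl; nra. Qed.

Lemma sumsq_ext d x y : (forall i, x i = y i) -> sumsq d x = sumsq d y.
Proof. intros H; induction d; simpl; [|rewrite IHd, H]; reflexivity. Qed.

Lemma sqrt_plane_triangle p q a b :
  sqrt ((p + q) ^ 2 + (a + b) ^ 2) <= sqrt (p ^ 2 + a ^ 2) + sqrt (q ^ 2 + b ^ 2).
Proof.
  assert (Hcs := sqrt_cauchy p a q b); unfold Rsqr in Hcs.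
  set (u := sqrt (p ^ 2 + a ^ 2)); set (w := sqrt (q ^ 2 + b ^ 2)).
  assert (Eu : u * u = p ^ 2 + a ^ 2) by (apply sqrt_sqrt; nra).
  assert (Ew : w * w = q ^ 2 + b ^ 2) by (apply sqrt_sqrt; nra).
  replace (p * p + a * a) with (p ^ 2 + a ^ 2) in Hcs by ring.
  replace (q * q + b * b) with (q ^ 2 + b ^ 2) in Hcs by ring.
  fold u w in Hcs.
  assert (0 <= u) by apply sqrt_pos; assert (0 <= w) by apply sqrt_pos.
  rewrite <- (sqrt_Rsqr (u + w)) by lra.
  apply sqrt_le_1_alt; unfold Rsqr; nra.
Qed.

Lemma vnorm_triangle d x y :
  vnorm d (fun i => x i + y i) <= vnorm d x + vnorm d y.
Proof.
  unfold vnorm; induction d as [|d IH].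
  - simpl; rewrite sqrt_0; lra.
  - change (sqrt (sumsq d (fun i => x i + y i) + (x d + y d) ^ 2)
            <= sqrt (sumsq d x + x d ^ 2) + sqrt (sumsq d y + y d ^ 2)).
    rewrite <- (pow2_sqrt (sumsq d x)), <- (pow2_sqrt (sumsq d y)) by apply sumsq_nonneg.
    eapply Rle_trans; [|apply sqrt_plane_triangle].
    apply sqrt_le_1_alt, Rplus_le_compat_r.
    rewrite <- (pow2_sqrt (sumsq d (fun i => x i + y i))) by apply sumsq_nonneg.
    assert (Hxy := sqrt_pos (sumsq d (fun i => x i + y i))).
    apply pow_incr; lra.
Qed.

Lemma vdist_triangle d x y w : vdist d x w <= vdist d x y + vdist d y w.
Proof.
  unfold vdist; eapply Rle_trans; [|apply vnorm_triangle].
  right; unfold vnorm; f_equal; apply sumsq_ext; intros; ring.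
Qed.

Lemma vnorm_le_add_vdist d x y : vnorm d x <= vnorm d y + vdist d x y.
Proof.
  unfold vdist; eapply Rle_trans; [|apply vnorm_triangle].
  right; unfold vnorm; f_equal; apply sumsq_ext; intros; ring.
Qed.
Section Holder.
Context {X : Type} (nrm : X -> R) (dist : X -> X -> R) (alpha : R) (f : R -> X).
Hypothesis dist_nonneg : forall x y, 0 <= dist x y.
Hypothesis dist_triangle : forall x y w, dist x w <= dist x y + dist y w.
Hypothesis nrm_nonneg : forall x, 0 <= nrm x.
Hypothesis nrm_le_add_dist : forall x y, nrm x <= nrm y + dist x y.
Hypothesis alpha_pos : 0 < alpha.

Lemma holsemi_nonneg a b : 0 <= holsemi dist alpha f a b.
Proof.
  apply Rsup_ge0; intros q [->|[s [t [Hs [Hst [Ht ->]]]]]]; [lra|].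
  apply Rmult_le_pos; [apply dist_nonneg | left; apply Rinv_0_lt_compat, rpow_pos; lra].
Qed.

Lemma holsemi_pair a0 b0 a b s t : is_holder dist alpha f a0 b0 ->
  a0 <= a -> b <= b0 -> a <= s -> s < t -> t <= b ->
  dist (f t) (f s) <= holsemi dist alpha f a b * rpow (t - s) alpha.
Proof.
  intros [K HK] Ha0 Hb0 Hs Hst Ht.
  apply Rdiv_le_iff; [apply rpow_pos; lra|].
  apply Rsup_ub; [|right; exists s, t; repeat split; assumption].
  exists (Rmax K 0); intros q [->|[s' [t' [Hs' [Hst' [Ht' ->]]]]]]; [apply Rmax_r|].
  eapply Rle_trans; [|apply Rmax_l].
  apply Rdiv_le_iff; [apply rpow_pos; lra | apply HK; lra].
Qed.

Lemma holsemi_lub a b M : 0 <= M ->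
  (forall s t, a <= s -> s < t -> t <= b -> dist (f t) (f s) <= M * rpow (t - s) alpha) ->
  holsemi dist alpha f a b <= M.
Proof.
  intros HM H; apply Rsup_lub with 0; [left; reflexivity|].
  intros q [->|[s [t [Hs [Hst [Ht ->]]]]]]; [exact HM|].
  apply Rdiv_le_iff; [apply rpow_pos; lra | apply H; assumption].
Qed.

Lemma holsemi_mono a0 b0 a b a' b' : is_holder dist alpha f a0 b0 ->
  a0 <= a' -> a' <= a -> b <= b' -> b' <= b0 ->
  holsemi dist alpha f a b <= holsemi dist alpha f a' b'.
Proof.
  intros Hf Ha0 Ha Hb Hb0; apply holsemi_lub; [apply holsemi_nonneg|].
  intros s t Hs Hst Ht; apply (holsemi_pair a0 b0); auto; lra.
Qed.

Lemma holsemi_split a0 b0 a m b : is_holder dist alpha f a0 b0 ->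
  a0 <= a -> a <= m -> m <= b -> b <= b0 ->
  holsemi dist alpha f a b <= holsemi dist alpha f a m + holsemi dist alpha f m b.
Proof.
  intros Hf Ha0 Ham Hmb Hb0.
  assert (H1 := holsemi_nonneg a m); assert (H2 := holsemi_nonneg m b).
  apply holsemi_lub; [lra|]; intros s t Hs Hst Ht.
  assert (Hp := rpow_nonneg (t - s) alpha).
  destruct (Rle_dec t m) as [Htm|Htm]; [|destruct (Rle_dec m s) as [Hms|Hms]].
  - eapply Rle_trans; [apply (holsemi_pair a0 b0 a m); auto; lra|]; nra.
  - eapply Rle_trans; [apply (holsemi_pair a0 b0 m b); auto; lra|]; nra.
  - eapply Rle_trans; [apply (dist_triangle _ (f m))|].
    assert (E1 := holsemi_pair a0 b0 m b m t Hf ltac:(lra) Hb0 ltac:(lra) ltac:(lra) Ht).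
    assert (E2 := holsemi_pair a0 b0 a m s m Hf Ha0 ltac:(lra) Hs ltac:(lra) ltac:(lra)).
    assert (R1 : rpow (t - m) alpha <= rpow (t - s) alpha) by (apply rpow_le; lra).
    assert (R2 : rpow (m - s) alpha <= rpow (t - s) alpha) by (apply rpow_le; lra).
    assert (Q1 := rpow_nonneg (t - m) alpha); assert (Q2 := rpow_nonneg (m - s) alpha).
    nra.
Qed.

Lemma holder_dist_small a0 b0 eps : is_holder dist alpha f a0 b0 -> 0 < eps ->
  exists2 h, 0 < h & forall s t, a0 <= s -> s < t -> t <= b0 -> t - s <= h ->
    dist (f t) (f s) <= eps.
Proof.
  intros [K HK] Heps.
  assert (HK0 := Rabs_pos K).
  destruct (rpow_small alpha (eps / (Rabs K + 1))) as [h Hh Hsmall];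
    [exact alpha_pos | apply Rdiv_lt_0_compat; lra|].
  exists h; [exact Hh|]; intros s t Hs Hst Ht Hts.
  assert (Hr := Hsmall _ Hts); assert (Hr0 := rpow_nonneg (t - s) alpha).
  assert (Ee : (Rabs K + 1) * (eps / (Rabs K + 1)) = eps) by (field; lra).
  eapply Rle_trans; [apply HK; assumption|].
  assert (K <= Rabs K) by apply Rle_abs.
  nra.
Qed.

(* The seminorm is a supremum over pairs [s < t], so pairs ending exactly at [b] are
   reached by continuity of [f]. *)
Lemma holsemi_closed_right a0 b0 a b L : is_holder dist alpha f a0 b0 ->
  a0 <= a -> a < b -> b <= b0 ->
  (forall c, a < c -> c < b -> holsemi dist alpha f a c <= L) ->
  holsemi dist alpha f a b <= L.
Proof.
  intros Hf Ha0 Hab Hb0 HL.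
  assert (HL0 : 0 <= L) by (eapply Rle_trans; [apply (holsemi_nonneg a ((a + b) / 2))|]; apply HL; lra).
  apply holsemi_lub; [exact HL0|]; intros s t Hs Hst Ht.
  destruct (Rlt_dec t b) as [Htb|Htb].
  { eapply Rle_trans; [apply (holsemi_pair a0 b0 a t); auto; lra|].
    apply Rmult_le_compat_r; [apply rpow_nonneg | apply HL; lra]. }
  replace t with b in * by lra.
  apply Rle_plus_epsilon; intros eps Heps.
  destruct (holder_dist_small a0 b0 eps Hf Heps) as [h Hh Hsmall].
  set (v := Rmax ((s + b) / 2) (b - h)).
  assert (Hv1 : s < v) by (unfold v; eapply Rlt_le_trans; [|apply Rmax_l]; lra).
  assert (Hv2 : v < b) by (unfold v; apply Rmax_lub_lt; lra).
  assert (Hv3 : b - h <= v) by apply Rmax_r.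
  eapply Rle_trans; [apply (dist_triangle _ (f v))|].
  assert (E1 : dist (f b) (f v) <= eps) by (apply Hsmall; lra).
  assert (E2 := holsemi_pair a0 b0 a v s v Hf Ha0 ltac:(lra) Hs Hv1 ltac:(lra)).
  assert (E3 : holsemi dist alpha f a v <= L) by (apply HL; lra).
  assert (E4 : rpow (v - s) alpha <= rpow (b - s) alpha) by (apply rpow_le; lra).
  assert (Q1 := rpow_nonneg (v - s) alpha); assert (Q2 := holsemi_nonneg a v).
  nra.
Qed.

Lemma supnorm_nonneg a b : 0 <= supnorm nrm f a b.
Proof. apply Rsup_ge0; intros v [u [_ [_ ->]]]; apply nrm_nonneg. Qed.

Lemma supnorm_pt a0 b0 a b u : is_holder dist alpha f a0 b0 ->
  a0 <= a -> b <= b0 -> a <= u -> u <= b -> nrm (f u) <= supnorm nrm f a b.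
Proof.
  intros [K HK] Ha0 Hb0 Hu1 Hu2.
  apply Rsup_ub; [|exists u; repeat split; assumption].
  exists (nrm (f a0) + Rabs K * rpow (b0 - a0) alpha).
  intros v [w [Hw1 [Hw2 ->]]].
  assert (0 <= Rabs K * rpow (b0 - a0) alpha)
    by (apply Rmult_le_pos; [apply Rabs_pos | apply rpow_nonneg]).
  destruct (Req_dec w a0) as [->|Hw]; [lra|].
  eapply Rle_trans; [apply (nrm_le_add_dist _ (f a0))|]; apply Rplus_le_compat_l.
  eapply Rle_trans; [apply HK; lra|].
  assert (K <= Rabs K) by apply Rle_abs; assert (0 <= Rabs K) by apply Rabs_pos.
  assert (rpow (w - a0) alpha <= rpow (b0 - a0) alpha) by (apply rpow_le; lra).
  assert (0 <= rpow (w - a0) alpha) by apply rpow_nonneg.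
  nra.
Qed.

Lemma supnorm_lub a b M : a <= b ->
  (forall u, a <= u -> u <= b -> nrm (f u) <= M) -> supnorm nrm f a b <= M.
Proof.
  intros Hab H; apply Rsup_lub with (nrm (f a)); [exists a; repeat split; lra|].
  intros v [u [Hu1 [Hu2 ->]]]; apply H; assumption.
Qed.

Lemma supnorm_mono a0 b0 a b a' b' : is_holder dist alpha f a0 b0 ->
  a0 <= a' -> a' <= a -> a <= b -> b <= b' -> b' <= b0 ->
  supnorm nrm f a b <= supnorm nrm f a' b'.
Proof.
  intros Hf Ha0 Ha Hab Hb Hb0; apply supnorm_lub; [exact Hab|].
  intros u Hu1 Hu2; apply (supnorm_pt a0 b0); auto; lra.
Qed.

Lemma supnorm_split a0 b0 a m b : is_holder dist alpha f a0 b0 ->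
  a0 <= a -> a <= m -> m <= b -> b <= b0 -> b - m <= 1 ->
  supnorm nrm f a b <= supnorm nrm f a m + holsemi dist alpha f m b.
Proof.
  intros Hf Ha0 Ham Hmb Hb0 Hlen.
  assert (Hh := holsemi_nonneg m b).
  apply supnorm_lub; [lra|]; intros u Hu1 Hu2.
  destruct (Rle_dec u m) as [Hum|Hum].
  - assert (nrm (f u) <= supnorm nrm f a m) by (apply (supnorm_pt a0 b0); auto; lra).
    lra.
  - eapply Rle_trans; [apply (nrm_le_add_dist _ (f m))|].
    apply Rplus_le_compat; [apply (supnorm_pt a0 b0); auto; lra|].
    eapply Rle_trans; [apply (holsemi_pair a0 b0 m b); auto; lra|].
    assert (rpow (u - m) alpha <= 1) by (apply rpow_le_1; lra).
    assert (0 <= rpow (u - m) alpha) by apply rpow_nonneg.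
    nra.
Qed.

Lemma supnorm_segment t a b :
  supnorm nrm (segment f t) a b = supnorm nrm f (t + a) (t + b).
Proof.
  apply Rsup_ext; intros v; unfold segment; split.
  - intros [u [H1 [H2 ->]]]; exists (t + u); repeat split; lra.
  - intros [u [H1 [H2 ->]]]; exists (u - t).
    replace (t + (u - t)) with u by ring; repeat split; lra.
Qed.

Lemma holsemi_segment t a b :
  holsemi dist alpha (segment f t) a b = holsemi dist alpha f (t + a) (t + b).
Proof.
  apply Rsup_ext; intros q; unfold segment; split;
    (intros [->|[s [s' [H1 [H2 [H3 ->]]]]]]; [left; reflexivity|right]).
  - exists (t + s), (t + s'); replace (t + s' - (t + s)) with (s' - s) by ring.
    repeat split; lra.
  - exists (s - t), (s' - t).
    replace (t + (s - t)) with s by ring; replace (t + (s' - t)) with s' by ring.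
    replace (s' - t - (s - t)) with (s' - s) by ring; repeat split; lra.
Qed.

End Holder.

Lemma vnorm_nonneg d x : 0 <= vnorm d x.
Proof. apply sqrt_pos. Qed.

Lemma vdist_nonneg d x y : 0 <= vdist d x y.
Proof. apply sqrt_pos. Qed.

Section HolderNorm.
Variables (d : nat) (beta a0 b0 : R) (z : R -> nat -> R).
Hypothesis beta_pos : 0 < beta.
Hypothesis z_holder : is_holder (vdist d) beta z a0 b0.

Lemma holnorm_nonneg a b : 0 <= holnorm d beta z a b.
Proof.
  apply Rplus_le_le_0_compat.
  - apply supnorm_nonneg, vnorm_nonneg.
  - apply holsemi_nonneg, vdist_nonneg.
Qed.

Lemma holnorm_mono a b a' b' : a0 <= a' -> a' <= a -> a <= b -> b <= b' -> b' <= b0 ->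
  holnorm d beta z a b <= holnorm d beta z a' b'.
Proof.
  intros; apply Rplus_le_compat.
  - eapply supnorm_mono; eauto using vnorm_le_add_vdist.
  - eapply holsemi_mono; eauto using vdist_nonneg.
Qed.

Lemma holnorm_split a m b : a0 <= a -> a <= m -> m <= b -> b <= b0 -> b - m <= 1 ->
  holnorm d beta z a b <= holnorm d beta z a m + 2 * holsemi (vdist d) beta z m b.
Proof.
  intros; unfold holnorm.
  assert (supnorm (vnorm d) z a b
          <= supnorm (vnorm d) z a m + holsemi (vdist d) beta z m b)
    by (eapply supnorm_split; eauto using vdist_nonneg, vnorm_le_add_vdist).
  assert (holsemi (vdist d) beta z a b
          <= holsemi (vdist d) beta z a m + holsemi (vdist d) beta z m b)
    by (eapply holsemi_split; eauto using vdist_nonneg, vdist_triangle).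
  lra.
Qed.

End HolderNorm.

Lemma holnorm_segment d beta (z : R -> nat -> R) t a b :
  holnorm d beta (segment z t) a b = holnorm d beta z (t + a) (t + b).
Proof. unfold holnorm; rewrite supnorm_segment, holsemi_segment; reflexivity. Qed.

Lemma ncard_card_is (P : nat -> Prop) n : card_is P n -> ncard P = n.
Proof.
  intros [l2 [N2 [M2 L2]]]; unfold ncard.
  destruct excluded_middle_informative as [H|H]; [|exfalso; apply H; exists n, l2; auto].
  destruct constructive_indefinite_description as [m [l1 [N1 [M1 L1]]]]; simpl; subst.
  apply Nat.le_antisymm; apply NoDup_incl_length; auto;
    intros x Hx; [apply M2, M1 | apply M1, M2]; assumption.
Qed.

Lemma scal_dist_nonneg x y : 0 <= scal_dist x y.
Proof. apply Rabs_pos. Qed.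

Section StoppingTimes.
Variables (C mu beta nu T : R) (omega : R -> R).
Hypothesis C_pos : 0 < C.
Hypothesis mu_pos : 0 < mu.
Hypothesis mu_lt_C : mu < C.
Hypothesis beta_lt_nu : beta < nu.
Hypothesis nu_le_1 : nu <= 1.
Hypothesis T_nonneg : 0 <= T.
Hypothesis omega_holder : is_holder scal_dist nu omega 0 T.
Hypothesis omega_small : forall eps, 0 < eps -> exists h, 0 < h /\
  forall s t, 0 <= s -> s < t -> t <= T -> t - s <= h ->
    Rabs (omega t - omega s) / rpow (t - s) nu <= eps.

Definition gauge (a t : R) : R :=
  C * (rpow (t - a) (1 - beta) + rpow (t - a) (nu - beta) * holsemi scal_dist nu omega a t).

Local Notation tau := (stop_time C mu beta nu T omega).

Lemma gauge_refl a : gauge a a = 0.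
Proof. unfold gauge; rewrite Rminus_diag, !rpow_nonpos by lra; ring. Qed.

Lemma gauge_mono a c c' : 0 <= a -> a <= c -> c <= c' -> c' <= T ->
  gauge a c <= gauge a c'.
Proof.
  intros; unfold gauge; apply Rmult_le_compat_l; [lra|].
  apply Rplus_le_compat; [apply rpow_le; lra|].
  apply Rmult_le_compat; [apply rpow_nonneg | apply holsemi_nonneg, scal_dist_nonneg
                         | apply rpow_le; lra |].
  eapply holsemi_mono; eauto using scal_dist_nonneg; lra.
Qed.

Lemma stop_time_S k :
  tau (S k) = Rsup (fun t => tau k <= t /\ t <= T /\ gauge (tau k) t <= mu).
Proof. reflexivity. Qed.

Lemma stop_set_start a : 0 <= a -> a <= T -> a <= a /\ a <= T /\ gauge a a <= mu.
Proof. rewrite gauge_refl; lra. Qed.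

Lemma stop_set_bound a : bound (fun t => a <= t /\ t <= T /\ gauge a t <= mu).
Proof. exists T; intros t Ht; apply Ht. Qed.

Lemma stop_time_range k : 0 <= tau k <= T.
Proof.
  induction k as [|k IH]; [simpl; lra|].
  rewrite stop_time_S; split.
  - apply Rle_trans with (tau k); [lra|].
    apply Rsup_ub; [apply stop_set_bound | apply stop_set_start; lra].
  - apply Rsup_lub with (tau k); [apply stop_set_start; lra | intros t Ht; apply Ht].
Qed.

Lemma stop_time_le_S k : tau k <= tau (S k).
Proof.
  destruct (stop_time_range k); rewrite stop_time_S.
  apply Rsup_ub; [apply stop_set_bound | apply stop_set_start; lra].
Qed.

Lemma stop_time_mono i j : (i <= j)%nat -> tau i <= tau j.
Proof.
  induction 1; [lra|]; eapply Rle_trans; [eassumption | apply stop_time_le_S].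
Qed.

Lemma gauge_stop_interval k c : tau k <= c -> c < tau (S k) -> gauge (tau k) c <= mu.
Proof.
  intros Hc1 Hc2; destruct (stop_time_range k); rewrite stop_time_S in Hc2.
  destruct (Rsup_approx _ _ _ (stop_set_start (tau k) ltac:(lra) ltac:(lra)) Hc2)
    as [x [Hx1 [Hx2 Hx3]] Hcx].
  apply Rle_trans with (gauge (tau k) x); [apply gauge_mono; lra | exact Hx3].
Qed.

(* Since [mu < C], the gauge exceeds [mu] on every interval of length at least 1. *)
Lemma stop_time_S_le k : tau (S k) <= tau k + 1.
Proof.
  destruct (stop_time_range k); rewrite stop_time_S.
  apply Rsup_lub with (tau k); [apply stop_set_start; lra|].
  intros x [Hx1 [Hx2 Hx3]]; apply Rnot_lt_le; intros Hx.
  assert (1 <= rpow (x - tau k) (1 - beta)) by (apply rpow_ge_1; lra).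
  assert (0 <= rpow (x - tau k) (nu - beta) * holsemi scal_dist nu omega (tau k) x)
    by (apply Rmult_le_pos; [apply rpow_nonneg | apply holsemi_nonneg, scal_dist_nonneg]).
  unfold gauge in Hx3; nra.
Qed.

Lemma gauge_small : exists2 h, 0 < h & forall a c,
  0 <= a -> a <= c -> c <= T -> c - a <= h -> gauge a c <= mu.
Proof.
  assert (Hm : 0 < mu / (2 * C)) by (apply Rdiv_lt_0_compat; lra).
  destruct (omega_small 1) as [h0 [Hh0 Hom]]; [lra|].
  destruct (rpow_small (1 - beta) (mu / (2 * C))) as [h1 Hh1 Hr1]; [lra | exact Hm |].
  destruct (rpow_small (nu - beta) (mu / (2 * C))) as [h2 Hh2 Hr2]; [lra | exact Hm |].
  exists (Rmin h0 (Rmin h1 h2)); [repeat apply Rmin_pos; assumption|].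
  assert (M0 := Rmin_l h0 (Rmin h1 h2)); assert (M12 := Rmin_r h0 (Rmin h1 h2)).
  assert (M1 := Rmin_l h1 h2); assert (M2 := Rmin_r h1 h2).
  intros a c Ha Hac Hc Hlen.
  assert (Hw : holsemi scal_dist nu omega a c <= 1).
  { apply holsemi_lub; [lra|]; intros s t Hs Hst Ht.
    apply Rdiv_le_iff; [apply rpow_pos; lra | apply Hom; lra]. }
  assert (R1 := Hr1 (c - a) ltac:(lra)); assert (R2 := Hr2 (c - a) ltac:(lra)).
  assert (Q1 := rpow_nonneg (c - a) (nu - beta)).
  assert (Q2 := holsemi_nonneg scal_dist nu omega scal_dist_nonneg a c).
  assert (rpow (c - a) (nu - beta) * holsemi scal_dist nu omega a c <= mu / (2 * C))
    by nra.
  unfold gauge; apply Rle_trans with (C * (2 * (mu / (2 * C)))).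
  - apply Rmult_le_compat_l; lra.
  - right; field; lra.
Qed.

Lemma stop_time_min_step : exists2 h, 0 < h & forall k, Rmin (tau k + h) T <= tau (S k).
Proof.
  destruct gauge_small as [h Hh Hsmall]; exists h; [exact Hh|]; intros k.
  destruct (stop_time_range k); rewrite stop_time_S.
  apply Rsup_ub; [apply stop_set_bound|].
  assert (M1 := Rmin_l (tau k + h) T); assert (M2 := Rmin_r (tau k + h) T).
  assert (tau k <= Rmin (tau k + h) T) by (apply Rmin_glb; lra).
  repeat split; try lra; apply Hsmall; lra.
Qed.

Lemma stop_time_reaches_T : exists k, T <= tau k.
Proof.
  destruct stop_time_min_step as [h Hh Hstep].
  assert (Hlin : forall k, Rmin (INR k * h) T <= tau k).
  { induction k as [|k IH].
    - simpl; rewrite Rmult_0_l; apply Rmin_l.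
    - eapply Rle_trans; [|apply Hstep]; rewrite S_INR.
      unfold Rmin in *; destruct (Rle_dec (INR k * h) T);
        destruct (Rle_dec ((INR k + 1) * h) T); destruct (Rle_dec (tau k + h) T); nra. }
  destruct (INR_archimed h T Hh) as [n Hn]; exists n.
  specialize (Hlin n); unfold Rmin in Hlin; destruct Rle_dec; lra.
Qed.

Lemma Ncount_stop_times n t :
  (forall m, (m < n)%nat -> tau (S m) < t) -> t <= tau (S n) ->
  Ncount C mu beta nu T omega t = n.
Proof.
  intros Hbefore Hafter; apply ncard_card_is.
  exists (seq 1 n); split; [apply seq_NoDup|]; split; [|apply length_seq].
  intros i; rewrite in_seq; split.
  - intros [Hi1 Hi2]; split; [lia|].
    destruct i as [|m]; [lia|]; apply Hbefore; lia.
  - intros [Hi1 Hi2]; split; [lia|].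
    apply Nat.nle_gt; intros Hi.
    assert (tau (S n) <= tau i) by (apply stop_time_mono; lia); lra.
Qed.

Lemma stop_time_locate t : 0 <= t -> t <= T ->
  exists n, tau n <= t <= tau (S n) /\ Ncount C mu beta nu T omega t = n.
Proof.
  intros Ht0 HtT.
  destruct (dec_inh_nat_subset_has_unique_least_element (fun n => t <= tau (S n)))
    as [n [[Hn Hleast] _]].
  - intros n; apply classic.
  - destruct stop_time_reaches_T as [k Hk]; exists k.
    assert (tau k <= tau (S k)) by apply stop_time_le_S; lra.
  - assert (Hbefore : forall m, (m < n)%nat -> tau (S m) < t).
    { intros m Hm; apply Rnot_le_lt; intros Hm'; specialize (Hleast m Hm'); lia. }
    exists n; split; [split; [|exact Hn] | apply Ncount_stop_times; assumption].
    destruct n as [|m]; [simpl; lra|].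
    apply Rlt_le, Hbefore; lia.
Qed.

End StoppingTimes.

Section Gronwall.
Variables (d : nat) (r T beta A mu : R) (z : R -> nat -> R).
Variables (G : R -> R -> R) (tau : nat -> R).
Hypothesis r_nonneg : 0 <= r.
Hypothesis beta_pos : 0 < beta.
Hypothesis A_nonneg : 0 <= A.
Hypothesis mu_pos : 0 < mu.
Hypothesis mu_lt_half : mu < 1 / 2.
Hypothesis z_holder : is_holder (vdist d) beta z (- r) T.
Hypothesis z_gronwall : forall s t, 0 <= s -> s <= t -> t <= T ->
  holsemi (vdist d) beta z s t <= A + G s t * holnorm d beta z (s - r) t.
Hypothesis tau_0 : tau O = 0.
Hypothesis tau_range : forall k, 0 <= tau k <= T.
Hypothesis tau_step : forall k, tau k <= tau (S k) <= tau k + 1.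
Hypothesis G_tau : forall k c, tau k <= c -> c < tau (S k) -> G (tau k) c <= mu.

Local Notation window c := (holnorm d beta z (c - r) c).

Lemma holsemi_absorb a c : 0 <= a -> a <= c -> c <= T -> c - a <= 1 -> G a c <= mu ->
  holsemi (vdist d) beta z a c <= (A + mu * window a) / (1 - 2 * mu).
Proof.
  intros Ha Hac Hc Hlen HG.
  assert (Hgr := z_gronwall a c Ha Hac Hc).
  assert (Hsplit : holnorm d beta z (a - r) c <= window a + 2 * holsemi (vdist d) beta z a c)
    by (apply (holnorm_split d beta (- r) T z beta_pos z_holder); lra).
  assert (HN := holnorm_nonneg d beta z (a - r) c).
  assert (G a c * holnorm d beta z (a - r) c <= mu * holnorm d beta z (a - r) c)
    by (apply Rmult_le_compat_r; assumption).
  apply Rle_div_iff; [lra | nra].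
Qed.

Lemma holsemi_stop_interval k c : tau k <= c -> c <= tau (S k) ->
  holsemi (vdist d) beta z (tau k) c <= (A + mu * window (tau k)) / (1 - 2 * mu).
Proof.
  intros Hc1 Hc2.
  destruct (tau_range k) as [Ha0 HaT], (tau_range (S k)) as [Hb0 HbT], (tau_step k) as [Hab Hlen].
  assert (HL : 0 <= (A + mu * window (tau k)) / (1 - 2 * mu)).
  { assert (0 <= window (tau k)) by apply holnorm_nonneg.
    apply Rmult_le_pos; [nra | left; apply Rinv_0_lt_compat; lra]. }
  assert (Hopen : forall c', tau k <= c' -> c' < tau (S k) ->
    holsemi (vdist d) beta z (tau k) c' <= (A + mu * window (tau k)) / (1 - 2 * mu))
    by (intros c' H1 H2; apply holsemi_absorb; try apply G_tau; lra).
  destruct (Rlt_dec c (tau (S k))) as [Hlt|Hge]; [apply Hopen; lra|].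
  destruct (Rlt_dec (tau k) c) as [Hkc|Hkc].
  - eapply holsemi_closed_right; eauto using vdist_nonneg, vdist_triangle; try lra.
    intros c' H1 H2; apply Hopen; lra.
  - apply holsemi_lub; [exact HL | intros; lra].
Qed.

Lemma window_step k c : tau k <= c -> c <= tau (S k) ->
  window c <= (window (tau k) + 2 * A) / (1 - 2 * mu).
Proof.
  intros Hc1 Hc2.
  destruct (tau_range k) as [Ha0 HaT], (tau_range (S k)) as [Hb0 HbT], (tau_step k) as [Hab Hlen].
  assert (Hmono : window c <= holnorm d beta z (tau k - r) c)
    by (apply (holnorm_mono d beta (- r) T z beta_pos z_holder); lra).
  assert (Hsplit : holnorm d beta z (tau k - r) c
                   <= window (tau k) + 2 * holsemi (vdist d) beta z (tau k) c)
    by (apply (holnorm_split d beta (- r) T z beta_pos z_holder); lra).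
  assert (Hh := holsemi_stop_interval k c Hc1 Hc2).
  assert (E : window (tau k) + 2 * ((A + mu * window (tau k)) / (1 - 2 * mu))
              = (window (tau k) + 2 * A) / (1 - 2 * mu)) by (field; lra).
  lra.
Qed.

Lemma window_growth k :
  window (tau k) + A / mu <= (window (tau O) + A / mu) / (1 - 2 * mu) ^ k.
Proof.
  induction k as [|k IH]; [simpl; rewrite Rdiv_1_r; lra|].
  assert (Hstep := window_step k (tau (S k)) (proj1 (tau_step k)) (Rle_refl _)).
  assert (E : (window (tau k) + 2 * A) / (1 - 2 * mu) + A / mu
              = (window (tau k) + A / mu) / (1 - 2 * mu)) by (field; lra).
  replace ((window (tau O) + A / mu) / (1 - 2 * mu) ^ S k)
    with ((window (tau O) + A / mu) / (1 - 2 * mu) ^ k / (1 - 2 * mu))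
    by (simpl; field; repeat split; try apply pow_nonzero; lra).
  apply Rle_trans with ((window (tau k) + A / mu) / (1 - 2 * mu)); [lra|].
  apply Rmult_le_compat_r; [left; apply Rinv_0_lt_compat; lra | exact IH].
Qed.

Lemma window_bound k c : tau k <= c -> c <= tau (S k) ->
  window c <= / (1 - 2 * mu) ^ S k * (A / mu + holnorm d beta z (- r) 0).
Proof.
  intros Hc1 Hc2.
  assert (H0 : window (tau O) = holnorm d beta z (- r) 0)
    by (rewrite tau_0; f_equal; ring).
  assert (HA : 2 * A <= A / mu) by (apply Rle_div_iff; nra).
  assert (Hg := window_growth k); rewrite H0 in Hg.
  replace (/ (1 - 2 * mu) ^ S k * (A / mu + holnorm d beta z (- r) 0))
    with ((holnorm d beta z (- r) 0 + A / mu) / (1 - 2 * mu) ^ k / (1 - 2 * mu))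
    by (simpl; field; repeat split; try apply pow_nonzero; lra).
  eapply Rle_trans; [apply (window_step k c Hc1 Hc2)|].
  apply Rmult_le_compat_r; [left; apply Rinv_0_lt_compat; lra | lra].
Qed.

End Gronwall.

Theorem lemma5
  (d : nat) (r T nu beta : R) (omega : R -> R) (z : R -> nat -> R)
  (A C mu : R)
  (hr : 0 < r) (hT : 0 < T)
  (hnu : 1/2 < nu /\ nu <= 1) (hbeta : 0 < beta /\ beta < nu)
  (homega : is_holder scal_dist nu omega 0 T)
  (homega_lim : forall eps, 0 < eps -> exists h, 0 < h /\
       forall s t, 0 <= s -> s < t -> t <= T -> t - s <= h ->
         Rabs (omega t - omega s) / rpow (t - s) nu <= eps)
  (hz : is_holder (vdist d) beta z (- r) T)
  (hA : 0 < A) (hC : 0 < C)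
  (hmu : 0 < mu /\ mu < Rmin (1/2) C)
  (hgron : forall s t, 0 <= s -> s <= t -> t <= T ->
     holsemi (vdist d) beta z s t
       <= A + C * (rpow (t - s) (1 - beta)
                   + rpow (t - s) (nu - beta) * holsemi scal_dist nu omega s t)
              * holnorm d beta z (s - r) t) :
  forall t, 0 <= t -> t <= T ->
    holnorm d beta (segment z t) (- r) 0
      <= / (1 - 2 * mu) ^ (S (Ncount C mu beta nu T omega t))
         * (A / mu + holnorm d beta z (- r) 0).
Proof.
  intros t Ht0 HtT.
  destruct hnu as [_ Hnu1], hbeta as [Hbeta0 Hbeta], hmu as [Hmu0 Hmu].
  assert (Hmu2 := Rmin_l (1/2) C); assert (HmuC := Rmin_r (1/2) C).
  destruct (stop_time_locate C mu beta nu T omega) with (t := t)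
    as [n [[Hn1 Hn2] ->]]; try assumption; try lra.
  rewrite holnorm_segment; replace (t + - r) with (t - r) by ring; rewrite Rplus_0_r.
  apply (window_bound d r T beta A mu z (gauge C beta nu omega)
           (stop_time C mu beta nu T omega)); try assumption; try lra.
  - reflexivity.
  - apply stop_time_range; lra.
  - intros k; split; [apply stop_time_le_S | apply stop_time_S_le]; lra.
  - apply gauge_stop_interval; lra || assumption.
Qed.
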